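(* For every integer $n\ge1$, $$\sum_{k=1}^n\frac{\binom{2n}{k}\left(\frac{1}{k+1}-10\right)}{4^k}=-\frac{2n+1}{n+1}\cdot\frac{\binom{2n}{n}}{4^n}+\frac{(18n+5)2^{4n}-(16n+4)5^{2n}}{(2n+1)2^{4n}}-\frac{3(4n+1)}{2(2n+1)}\cdot\frac{5^{2n}}{2^{4n}}\sum_{k=1}^n\binom{2k}{k}\left(\frac{4}{25}\right)^k.$$ *)

From mathcomp Require Export all_boot all_order all_algebra.

From mathcomp Require Import ring lra zify.
Import GRing.Theory Num.Theory.
Local Open Scope ring_scope.

(* Write c_n = C(2n,n)/4^n, S_n = sum_(k=1..n) C(2k,k) (4/25)^k, and let
   T_n = sum_(k=0..n) C(2n,k)/4^k and W_n = sum_(k=0..n+1) C(2n+1,k)/4^k be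
   the lower halves of the binomial expansions of (1 + 1/4)^(2n) and
   (1 + 1/4)^(2n+1).
   1. Pascal's rule for truncated sums gives W_n in terms of T_n and T_(n+1)
      in terms of W_n; together with the ratios of the binomial coefficients
      next to the centre, this yields by induction the closed form
        T_n = (25/16)^n (4/5 + 3/10 S_n) + c_n / 5.
   2. The absorption identity C(2n,k)/(k+1) = C(2n+1,k+1)/(2n+1) turns the
      sum with the weights 1/(k+1) into (4/(2n+1)) (W_n - 1), so the
      left-hand side of the theorem equals 4/(2n+1) (W_n - 1) - 10 T_n + 9.
   Substituting the closed form of T_n (and of W_n through T_n) leaves an
   identity of rational functions in n, c_n, (25/16)^n, 4^n and S_n. *)

Section TruncatedBinomialSums.
Variable R : pzRingType.

Definition binom_psum (x : R) (m N : nat) : R := \sum_(k < N) 'C(m, k)%:R * x ^+ k.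

Lemma binom_psum_last (x : R) (m N : nat) :
  binom_psum x m N.+1 = binom_psum x m N + 'C(m, N)%:R * x ^+ N.
Proof. by rewrite /binom_psum big_ord_recr. Qed.

Lemma binom_psum_pascal (x : R) (m N : nat) :
  binom_psum x m.+1 N.+1 = binom_psum x m N.+1 + binom_psum x m N * x.
Proof.
rewrite /binom_psum big_ord_recl [in RHS]big_ord_recl !bin0 -addrA; congr (_ + _).
rewrite mulr_suml -big_split; apply: eq_bigr => i _ /=.
by rewrite binS natrD mulrDl -mulrA -exprSr.
Qed.

End TruncatedBinomialSums.
Arguments binom_psum {R}.

Section BinomialRatios.
Variable R : numFieldType.

Lemma natr_eq_mul_div {a b c d : nat} :
  (a.+1 * b = c * d)%N -> (b%:R : R) = c%:R * d%:R / a.+1%:R.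
Proof.
move=> eq_nat; have a1_neq0 : (a.+1%:R : R) != 0 by rewrite pnatr_eq0.
by rewrite -natrM -eq_nat natrM mulrAC mulfV ?mul1r.
Qed.

(* Absorption C(m,k)/(k+1) = C(m+1,k+1)/(m+1): the sum with weights
   1/(k+1) is a truncated sum for the exponent m+1 with its first term removed. *)
Lemma binom_psum_absorb (x : R) (m N : nat) :
  m.+1%:R * \sum_(k < N) 'C(m, k)%:R / k.+1%:R * x ^+ k.+1
  = binom_psum x m.+1 N.+1 - 1.
Proof.
rewrite /binom_psum big_ord_recl bin0 expr0 mulr1 addrAC subrr add0r mulr_sumr.
apply: eq_bigr => k _ /=.
by rewrite (natr_eq_mul_div (esym (mul_bin_diag m.+1 k))) /= !mulrA.
Qed.

Lemma binom_center_pred (n : nat) :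
  ('C(2 * n, n.+1)%:R : R) = n%:R * 'C(2 * n, n)%:R / n.+1%:R.
Proof. by apply: natr_eq_mul_div; rewrite mul_bin_left; congr (_ * _)%N; lia. Qed.

Lemma binom_center_odd (n : nat) :
  ('C((2 * n).+1, n.+1)%:R : R) = (2 * n).+1%:R * 'C(2 * n, n)%:R / n.+1%:R.
Proof. by apply: natr_eq_mul_div; rewrite -mul_bin_diag. Qed.

Lemma binom_center_succ (n : nat) :
  ('C(2 * n.+1, n.+1)%:R : R) = (2 * (2 * n).+1)%:R * 'C(2 * n, n)%:R / n.+1%:R.
Proof.
apply: natr_eq_mul_div.
have -> : (2 * n.+1 = (2 * n).+2)%N by rewrite mulnS.
have binom_sym : 'C((2 * n).+1, n) = 'C((2 * n).+1, n.+1).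
  by rewrite -[in RHS]bin_sub; [congr 'C(_, _); lia | lia].
by rewrite binS binom_sym mulnDr -mul_bin_diag /=; lia.
Qed.

End BinomialRatios.

Definition even_half_sum (n : nat) : rat := binom_psum 4^-1 (2 * n) n.+1.
Definition odd_half_sum (n : nat) : rat := binom_psum 4^-1 (2 * n).+1 n.+2.
Definition central_sum (n : nat) : rat :=
  \sum_(1 <= k < n.+1) 'C(2 * k, k)%:R * (4 / 25) ^+ k.

Lemma odd_half_sum_of_even (n : nat) :
  odd_half_sum n = even_half_sum n * (1 + 4^-1) + 'C(2 * n, n.+1)%:R / 4 ^+ n.+1.
Proof.
rewrite /odd_half_sum binom_psum_pascal binom_psum_last /even_half_sum exprVn.
by rewrite mulrDr mulr1 addrAC.
Qed.

Lemma even_half_sum_succ (n : nat) :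
  even_half_sum n.+1 =
  odd_half_sum n + (odd_half_sum n - 'C((2 * n).+1, n.+1)%:R / 4 ^+ n.+1) * 4^-1.
Proof.
rewrite /even_half_sum /odd_half_sum (_ : 2 * n.+1 = (2 * n).+2)%N ?mulnS //.
by rewrite binom_psum_pascal [binom_psum _ _.+1 n.+2]binom_psum_last exprVn addrK.
Qed.

Lemma central_sum_succ (n : nat) :
  central_sum n.+1 = central_sum n + 'C(2 * n.+1, n.+1)%:R * (4 / 25) ^+ n.+1.
Proof. by rewrite /central_sum big_nat_recr. Qed.

Lemma ratio_4_25 (n : nat) : (4 / 25 : rat) ^+ n = ((25 / 16) ^+ n * 4 ^+ n)^-1.
Proof.
have ratio_inv : (4 / 25 : rat) = (25 / 16 * 4)^-1 by field.
by rewrite ratio_inv exprVn exprMn.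
Qed.

Lemma even_half_sum_closed (n : nat) :
  even_half_sum n = (25 / 16) ^+ n * (4 / 5 + 3 / 10 * central_sum n)
                    + 1 / 5 * ('C(2 * n, n)%:R / 4 ^+ n).
Proof.
elim: n => [|n IH]; first by rewrite /even_half_sum /binom_psum /central_sum big_ord1 big_geq.
rewrite even_half_sum_succ odd_half_sum_of_even central_sum_succ IH.
rewrite binom_center_pred binom_center_odd binom_center_succ ratio_4_25 !exprS.
have pow4_neq0 : (4 : rat) ^+ n != 0 by rewrite expf_neq0.
have pow25_16_neq0 : (25 / 16 : rat) ^+ n != 0 by rewrite expf_neq0.
field.
by rewrite pow4_neq0 pow25_16_neq0 nat1r pnatr_eq0.
Qed.

Lemma quarter_weighted_sum (n : nat) :
  \sum_(k < n.+1) ('C(2 * n, k)%:R * (1 / k.+1%:R - 10) / 4 ^+ k : rat)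
  = 4 / (2 * n).+1%:R * (odd_half_sum n - 1) - 10 * even_half_sum n.
Proof.
have odd_neq0 : ((2 * n).+1%:R : rat) != 0 by rewrite pnatr_eq0.
rewrite /odd_half_sum -binom_psum_absorb mulrA mulfVK // /even_half_sum /binom_psum.
rewrite !mulr_sumr -sumrB; apply: eq_bigr => k _.
have k1_neq0 : (k.+1%:R : rat) != 0 by rewrite pnatr_eq0.
rewrite !exprVn exprS; field.
by rewrite expf_neq0 // nat1r.
Qed.

Lemma pow_2_4n (n : nat) : (2 : rat) ^+ (4 * n) = 4 ^+ n * 4 ^+ n.
Proof. by rewrite exprM -exprMn. Qed.

Lemma pow_5_2n (n : nat) : (5 : rat) ^+ (2 * n) = (25 / 16) ^+ n * 4 ^+ n * 4 ^+ n.
Proof.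
have five_sq : (5 : rat) ^+ 2 = 25 / 16 * 4 * 4 by field.
by rewrite exprM five_sq exprMn exprMn.
Qed.

Theorem mainTheorem14 (n : nat) (hn : (1 <= n)%N) :
  \sum_(1 <= k < n.+1) ('C(2 * n, k)%:R * (1 / (k.+1)%:R - 10) / 4 ^+ k : rat)
  = - ((2 * n + 1)%:R / (n + 1)%:R) * ('C(2 * n, n)%:R / 4 ^+ n)
    + ((18 * n + 5)%:R * 2 ^+ (4 * n) - (16 * n + 4)%:R * 5 ^+ (2 * n))
        / ((2 * n + 1)%:R * 2 ^+ (4 * n))
    - (3 * (4 * n + 1))%:R / (2 * (2 * n + 1))%:R
        * (5 ^+ (2 * n) / 2 ^+ (4 * n))
        * \sum_(1 <= k < n.+1) ('C(2 * k, k)%:R * (4 / 25) ^+ k).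
Proof.
set F := fun k : nat => ('C(2 * n, k)%:R * (1 / k.+1%:R - 10) / 4 ^+ k : rat).
(* The k = 0 term of the full sum is 1 - 10 = -9. *)
have drop_first_term : \sum_(1 <= k < n.+1) F k = \sum_(k < n.+1) F k + 9.
  by rewrite -(big_mkord xpredT F) big_ltn // /F bin0 expr0; field.
rewrite drop_first_term quarter_weighted_sum odd_half_sum_of_even even_half_sum_closed.
rewrite -/(central_sum n) binom_center_pred pow_2_4n pow_5_2n exprS.
(* Both sides are now rational in n, c_n, 4^n, (25/16)^n and S_n. *)
field.
have n_ge0 : (0 : rat) <= n%:R := ler0n rat n.
by rewrite expf_neq0 //=; apply/andP; split; apply: lt0r_neq0; lra.
Qed.
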